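(* Let $\mathbb{F},\widetilde{\mathbb{F}}$ be arbitrary fields of characteristic not $2$, and let $f:\mathbb{F}\to\widetilde{\mathbb{F}}$ be an SD-map. Then $f$ is injective, multiplicative (i.e.\ $f(xy)=f(x)f(y)$ for all $x,y\in\mathbb{F}$), and odd (i.e.\ $f(-x)=-f(x)$ for all $x$), and $f(0)=0$, $f(1)=1$.
   Context: A map $f:\mathbb{F}\to\widetilde{\mathbb{F}}$ between fields is called an SD-map if for all $x\neq y$ in $\mathbb{F}$ one has $f(x)\neq f(y)$ and \[ f\left(\frac{x+y}{x-y}\right)=\frac{f(x)+f(y)}{f(x)-f(y)}. \] *)

From mathcomp Require Import all_boot all_algebra.
Set Implicit Arguments. Unset Strict Implicit. Unset Printing Implicit Defensive.
Import GRing.Theory.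
Local Open Scope ring_scope.

Definition SD_map (F G : fieldType) (f : F -> G) : Prop :=
  forall x y : F, x != y ->
    f x != f y /\ f ((x + y) / (x - y)) = (f x + f y) / (f x - f y).

(* Off the diagonal, sd_quot a b = sd_quot c d
   forces a d = b c (this is where 2 != 0 is used), and sd_quot is invariant
   under scaling both arguments.  Since sd_quot 1 0 = sd_quot (-1) 0, this gives
   f 0 = 0, hence f 1 = 1 and f (-1) = -1; then sd_quot (x y) x = sd_quot y 1
   gives f (x y) = f x f y, and oddness is multiplicativity by -1. *)

From mathcomp Require Import all_boot all_algebra.
From mathcomp Require Import ring.
Import GRing.Theory.
Local Open Scope ring_scope.

Definition sd_quot {R : fieldType} (a b : R) : R := (a + b) / (a - b).

Lemma natr2_neq0 {R : fieldType} : 2%N \notin [pchar R] -> (2 : R) != 0.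
Proof. by apply: contra => h2; rewrite inE /= h2. Qed.

Lemma oner_neqN1 {R : fieldType} : (2 : R) != 0 -> (1 : R) != -1.
Proof. by rewrite -addr_eq0. Qed.

Lemma sd_quot_eq {R : fieldType} {a b c d : R} : (2 : R) != 0 ->
  a != b -> c != d -> sd_quot a b = sd_quot c d -> a * d = b * c.
Proof.
move=> h2 hab hcd /eqP; rewrite /sd_quot eqr_div ?subr_eq0 // => /eqP e.
apply: (mulfI h2); apply/eqP; rewrite -subr_eq0; apply/eqP.
by transitivity ((c + d) * (a - b) - (a + b) * (c - d)); [ring | rewrite e subrr].
Qed.

Lemma sd_quotMl {R : fieldType} {x : R} (a b : R) :
  x != 0 -> sd_quot (x * a) (x * b) = sd_quot a b.
Proof.
by move=> x0; rewrite /sd_quot -mulrDr -mulrBr invfM mulrACA divff // mul1r.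
Qed.

Lemma sd_quotx0 {R : fieldType} {x : R} : x != 0 -> sd_quot x 0 = 1.
Proof. by move=> x0; rewrite /sd_quot addr0 subr0 divff. Qed.

Lemma sd_quot0x {R : fieldType} {x : R} : x != 0 -> sd_quot 0 x = -1.
Proof. by move=> x0; rewrite /sd_quot add0r sub0r invrN mulrN divff. Qed.

Section SDMap.

Variables (F G : fieldType) (f : F -> G).
Hypothesis (hF : (2 : F) != 0) (hG : (2 : G) != 0) (hf : SD_map f).

Lemma sd_map_neq {x y : F} : x != y -> f x != f y.
Proof. by case/hf. Qed.

Lemma sd_mapE {x y : F} : x != y -> f (sd_quot x y) = sd_quot (f x) (f y).
Proof. by case/hf. Qed.

Lemma sd_map_inj : injective f.
Proof.
by move=> x y fxy; apply/eqP; apply: contraT => /sd_map_neq; rewrite fxy eqxx.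
Qed.

Lemma sd_map_quot_eq {x y u v : F} : x != y -> u != v ->
  sd_quot x y = sd_quot u v -> f x * f v = f y * f u.
Proof.
move=> xy uv e; apply: sd_quot_eq; rewrite ?sd_map_neq //.
by rewrite -!sd_mapE // e.
Qed.

Lemma sd_map0 : f 0 = 0.
Proof.
have n10 : (1 : F) != 0 := oner_neq0 F.
have nN10 : (-1 : F) != 0 by rewrite oppr_eq0.
have e : f 1 * f 0 = f 0 * f (-1).
  by apply: (sd_map_quot_eq n10 nN10); rewrite !sd_quotx0.
move/eqP: e; rewrite mulrC -subr_eq0 -mulrBr mulf_eq0 subr_eq0.
by rewrite (negbTE (sd_map_neq (oner_neqN1 hF))) orbF => /eqP.
Qed.

Lemma sd_map1 : f 1 = 1.
Proof.
have f10 : f 1 != 0 by rewrite -sd_map0 sd_map_neq ?oner_neq0.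
by rewrite -{1}(sd_quotx0 (oner_neq0 F)) sd_mapE ?oner_neq0 // sd_map0 sd_quotx0.
Qed.

Lemma sd_mapN1 : f (-1) = -1.
Proof.
rewrite -(sd_quot0x (oner_neq0 F)) sd_mapE; last by rewrite eq_sym oner_neq0.
by rewrite sd_map0 sd_map1 sd_quot0x ?oner_neq0.
Qed.

Lemma sd_mapM (x y : F) : f (x * y) = f x * f y.
Proof.
have [->|x0] := eqVneq x 0; first by rewrite mul0r sd_map0 mul0r.
have [->|y1] := eqVneq y 1; first by rewrite mulr1 sd_map1 mulr1.
have xyx : x * y != x by rewrite -[X in _ != X]mulr1 (inj_eq (mulfI x0)).
have e : f (x * y) * f 1 = f x * f y.
  by apply: (sd_map_quot_eq xyx y1); rewrite -{2}[x]mulr1 sd_quotMl.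
by rewrite -e sd_map1 mulr1.
Qed.

Lemma sd_mapN (x : F) : f (- x) = - f x.
Proof. by rewrite -mulN1r sd_mapM sd_mapN1 mulN1r. Qed.

End SDMap.

Theorem theorem2p1 (F G : fieldType) (f : F -> G)
  (hF : ~~ (2%N \in [pchar F])) (hG : ~~ (2%N \in [pchar G]))
  (hf : SD_map f) :
  injective f /\ (forall x y : F, f (x * y) = f x * f y) /\
  (forall x : F, f (- x) = - f x) /\ f 0 = 0 /\ f 1 = 1.
Proof.
have h2F := natr2_neq0 hF; have h2G := natr2_neq0 hG.
split; first exact: sd_map_inj.
split; first exact: sd_mapM.
split; first exact: sd_mapN.
by split; [exact: sd_map0 | exact: sd_map1].
Qed.
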